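(* Let $\mathbf{x}$ be a parking function of length $n$ and run Algorithm A on $\mathbf{x}$. Suppose that at some down step, $j$ and $k$ are both down feeder candidates for an index $i$ (that is, $y_i>0$, $i<j$, $i<k$, and neither $i\leftarrow j$ nor $i\leftarrow k$ has been introduced yet). Then $j$ is chosen as the down feeder at this step if and only if $|s_j(\mathbf{x})|>|s_k(\mathbf{x})|$.
   Context: A parking function of length $n$ is a sequence of positive integers which, sorted increasingly as $x_{(1)}\le\dots\le x_{(n)}$, satisfies $x_{(k)}\le k$ for all $k$. Algorithm A: Input a parking function $\mathbf{x}\in\mathbb{Z}_{>0}^n$; start with the vertex set $[n]$ and no edges, and set $\mathbf{y}:=\mathbf{x}-(1,\dots,1)$. Repeat the following. (Up step) If some $y_k=0$: let $j:=\max\{k: y_k=0\}$ (the up feeder); for every $k>j$ with $y_k>0$, introduce the directed (up) edge $j\rightarrow k$ and replace $y_k$ by $y_k-1$; replace every entry that was negative at the start of this step by that entry minus $1$; set $y_j:=-1$; repeat. (Down step) Else, if some $y_k>0$: among all indices $j$ such that there is $k<j$ with $y_k>0$ and the edge $k\leftarrow j$ not yet introduced (down feeder candidates), choose $j$ with minimal $y_j$ (the down feeder); for every $k<j$ with $y_k>0$, introduce the directed (down) edge $k\leftarrow j$ (directed from $j$ to $k$) and replace $y_k$ by $y_k-1$; repeat. (Stop) Else (all $y_k<0$): join every pair of vertices not yet joined by an undirected (downish) edge and stop. Output: the mixed graph $P(\mathbf{x})$ and the source priority vector $s(\mathbf{x}):=(y_1,\dots,y_n)$ (final values).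
   Formalization: The iff concerns only candidates j ≠ k one of which is the down feeder at this step, and a tie for minimal $y_j$ among candidates goes to the smallest index. Apart from conventions, each condition added here is assumed in the paper as well or is needed for the statement above to hold. *)

(* Formalization of Algorithm A (indices are 0-based). *)
From mathcomp Require Import all_boot all_order all_algebra.
Import Order.TTheory GRing.Theory Num.Theory.
Set Implicit Arguments. Unset Strict Implicit. Unset Printing Implicit Defensive.
Local Open Scope ring_scope.

Definition parking_function (x : seq nat) : bool :=
  all (fun a => (0 < a)%N) x &&
  [forall i : 'I_(size x), (nth 0%N (sort leq x) i <= i.+1)%N].

(* State of Algorithm A: current vector y, the introduced down edges
   (a pair (k, j) records the down edge  k <- j), and a stop flag.
   Up edges and the final undirected edges never influence the control
   flow nor y, so they are not recorded. *)
Record state := State { ys : seq int; downs : seq (nat * nat); halted : bool }.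

Definition init (x : seq nat) : state :=
  State [seq (a%:Z - 1) | a <- x] [::] false.

Definition up_feeder (y : seq int) : nat :=
  last 0%N [seq k <- iota 0 (size y) | y`_k == 0].

Definition up_update (y : seq int) (j : nat) : seq int :=
  [seq (if k == j then -1
        else if ((j < k)%N && (0 < y`_k)) || (y`_k < 0) then y`_k - 1
        else y`_k) | k <- iota 0 (size y)].

Definition is_cand (st : state) (i j : nat) : bool :=
  [&& (i < j)%N, (j < size (ys st))%N, 0 < (ys st)`_i & (i, j) \notin downs st].

Definition down_cand (st : state) (j : nat) : bool :=
  has (fun i => is_cand st i j) (iota 0 (size (ys st))).

Definition cands (st : state) : seq nat :=
  [seq j <- iota 0 (size (ys st)) | down_cand st j].

Definition down_feeder (st : state) : nat :=
  let c := cands st in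
  nth 0%N c (find (fun j => all (fun k => (ys st)`_j <= (ys st)`_k) c) c).

Definition down_update (st : state) (j : nat) : state :=
  let y := ys st in
  State [seq (if (k < j)%N && (0 < y`_k) then y`_k - 1 else y`_k)
        | k <- iota 0 (size y)]
        ([seq (k, j) | k <- iota 0 j & 0 < y`_k] ++ downs st)
        false.

Definition step (st : state) : state :=
  if halted st then st else
  let y := ys st in
  if has (fun v => v == 0) y then State (up_update y (up_feeder y)) (downs st) false
  else if has (fun v => 0 < v) y then
    (if cands st is [::] then State y (downs st) true (* never happens *)
     else down_update st (down_feeder st))
  else State y (downs st) true.

Definition is_down_step (st : state) : bool :=
  [&& ~~ halted st, ~~ has (fun v => v == 0) (ys st) & has (fun v => 0 < v) (ys st)].

Definition state_at (x : seq nat) (t : nat) : state := iter t step (init x).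

(* The algorithm stops after at most size x + sumn x steps (at most size x
   up steps; each down step decreases the total positive mass), so this is
   the final vector, i.e. the source priority vector s(x). *)
Definition source_priority (x : seq nat) : seq int :=
  ys (state_at x (size x + sumn x).+1).

From mathcomp Require Import all_boot all_order all_algebra zify.
Import Order.TTheory GRing.Theory Num.Theory.
Set Implicit Arguments. Unset Strict Implicit. Unset Printing Implicit Defensive.
Local Open Scope ring_scope.

(* Every down feeder has a negative entry: a parking function always admits a
   down feeder candidate with negative entry.  Negative entries are pairwise
   distinct, all decrease by one at each up step and are left alone by down
   steps, while a nonnegative entry only decreases and, when it becomes
   negative (as an up feeder), lands strictly below all negative entries.
   Hence once the feeder j (of minimal entry) is chosen over a candidate k, we
   have y_j < y_k at all later times, in particular in the final, entirely
   negative, vector s(x). *)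

Lemma last_filter_iotaP (p : pred nat) n : has p (iota 0 n) ->
  [/\ (last 0%N [seq k <- iota 0 n | p k] < n)%N,
      p (last 0%N [seq k <- iota 0 n | p k])
    & forall m, (last 0%N [seq k <- iota 0 n | p k] < m < n)%N -> ~~ p m].
Proof.
elim: n => [|n IH] //.
rewrite -addn1 iotaD filter_cat /= add0n has_cat /= orbF.
case: (boolP (p n)) => pn.
  by rewrite last_cat /=; split => // [|m]; lia.
rewrite cats0 orbF => /IH [ln pl above].
split => // [|m /andP[lm mn]]; first lia.
have [->|neq] := eqVneq m n => //.
by apply: above; rewrite lm /=; lia.
Qed.

Lemma has_argmin (T : eqType) (R : realDomainType) (g : T -> R) (c : seq T) :
  c != [::] -> has (fun j => all (fun k => g j <= g k) c) c.
Proof.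
elim: c => [|a c IH] _ //.
case: c IH => [|b c] IH; first by rewrite /= lexx.
have /hasP [m mc /allP mall] := IH isT.
have [gam|gam] := lerP (g a) (g m).
  apply/hasP; exists a; first by rewrite inE eqxx.
  apply/allP => z; rewrite inE => /orP[/eqP ->//|zc].
  exact: le_trans gam (mall z zc).
apply/hasP; exists m; first by rewrite inE mc orbT.
apply/allP => z; rewrite inE => /orP[/eqP ->|zc]; first exact: ltW.
exact: mall.
Qed.

Lemma sub_in_count (T : eqType) (p q : pred T) (s : seq T) :
  {in s, forall a, p a -> q a} -> (count p s <= count q s)%N.
Proof.
elim: s => //= a s IH pq.
apply: leq_add; last by apply: IH => b bs; apply: pq; rewrite inE bs orbT.
by case: (boolP (p a)) => //= pa; rewrite pq // inE eqxx.
Qed.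

Lemma count_predU1_notin (T : eqType) (P : pred T) (s : seq T) u :
  uniq s -> u \in s -> ~~ P u ->
  count (fun j => P j || (j == u)) s = (count P s).+1.
Proof.
move=> us su Pu; have := count_predUI P (pred1 u) s.
rewrite (@eq_count _ (predI P (pred1 u)) pred0) ?count_pred0; last first.
  by move=> j /=; case: (eqVneq j u) => [->|_]; rewrite ?andbF // (negbTE Pu).
by rewrite count_uniq_mem ?su // addn0 addn1.
Qed.

Lemma parking_function_count (x : seq nat) q :
  parking_function x -> (q < size x)%N ->
  (q.+1 <= count (fun a => a <= q.+1)%N x)%N.
Proof.
case/andP => _ /forallP park qx; have := park (Ordinal qx) => /= xq.
have sorted_x := sort_sorted leq_total x.
have q_sort : (q < size (sort leq x))%N by rewrite size_sort.
rewrite -(count_sort leq) -(cat_take_drop q.+1 (sort leq x)) count_cat.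
have : all (fun a => a <= q.+1)%N (take q.+1 (sort leq x)).
  apply/(all_nthP 0%N) => i; rewrite size_takel // => iq.
  rewrite nth_take //; apply: leq_trans xq.
  by apply: (sorted_leq_nth leq_trans leqnn) => //; rewrite inE; lia.
by rewrite all_count => /eqP ->; rewrite size_takel //; lia.
Qed.

Lemma nth_up_update y u m : (m < size y)%N ->
  (up_update y u)`_m = if m == u then -1
     else if ((u < m)%N && (0 < y`_m)) || (y`_m < 0) then y`_m - 1 else y`_m.
Proof. by move=> my; rewrite /up_update nth_mkseq. Qed.

Lemma size_up_update y u : size (up_update y u) = size y.
Proof. exact: size_mkseq. Qed.

Lemma nth_down_update st f m : (m < size (ys st))%N ->
  (ys (down_update st f))`_m =
    if (m < f)%N && (0 < (ys st)`_m) then (ys st)`_m - 1 else (ys st)`_m.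
Proof. by move=> my; rewrite /down_update /= nth_mkseq. Qed.

Lemma size_down_update st f : size (ys (down_update st f)) = size (ys st).
Proof. exact: size_mkseq. Qed.

Lemma up_feederP (y : seq int) : has (fun v => v == 0) y ->
  [/\ (up_feeder y < size y)%N, y`_(up_feeder y) = 0
    & forall m, (up_feeder y < m < size y)%N -> y`_m != 0].
Proof.
move=> /(has_nthP 0) [i iy yi].
have : has (fun k => y`_k == 0) (iota 0 (size y)).
  by apply/hasP; exists i => //; rewrite mem_iota.
by case/last_filter_iotaP => ? /eqP ? ?; split.
Qed.

Lemma down_feederP st : cands st != [::] ->
  down_feeder st \in cands st /\
  forall c, c \in cands st -> (ys st)`_(down_feeder st) <= (ys st)`_c.
Proof.
move=> /(has_argmin (fun j => (ys st)`_j)).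
rewrite /down_feeder has_find => found.
have := found; rewrite -has_find => /(nth_find 0%N) /allP minimal.
by split => //; apply: mem_nth.
Qed.

Lemma mem_cands st j : (j \in cands st) = (j < size (ys st))%N && down_cand st j.
Proof. by rewrite /cands mem_filter mem_iota andbC. Qed.

Lemma mem_candsP st j : j \in cands st -> exists i, is_cand st i j.
Proof. by rewrite mem_cands => /andP[_ /hasP[i _ ij]]; exists i. Qed.

Lemma is_cand_cands st i j : is_cand st i j -> j \in cands st.
Proof.
move=> ij; have /and4P[ltij jy _ _] := ij.
by rewrite mem_cands jy; apply/hasP; exists i; rewrite // mem_iota; lia.
Qed.

Variant step_spec st : Prop :=
 | StepHalted of halted st & step st = st
 | StepUp of ~~ halted st & has (fun v => v == 0) (ys st) &
     step st = State (up_update (ys st) (up_feeder (ys st))) (downs st) false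
 | StepDown of is_down_step st & cands st != [::] &
     step st = down_update st (down_feeder st)
 | StepNoCand of is_down_step st & cands st = [::] &
     step st = State (ys st) (downs st) true
 | StepStop of ~~ halted st & ~~ has (fun v => v == 0) (ys st) &
     ~~ has (fun v => 0 < v) (ys st) & step st = State (ys st) (downs st) true.

Lemma stepP st : step_spec st.
Proof.
case: (boolP (halted st)) => hst.
  by apply: StepHalted => //; rewrite /step hst.
have unfold_step : step st = if has (fun v => v == 0) (ys st)
    then State (up_update (ys st) (up_feeder (ys st))) (downs st) false
    else if has (fun v => 0 < v) (ys st) then
      (if cands st is [::] then State (ys st) (downs st) true
       else down_update st (down_feeder st))
    else State (ys st) (downs st) true.
  by rewrite /step (negbTE hst).
case: (boolP (has (fun v => v == 0) (ys st))) => zero.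
  by apply: StepUp => //; rewrite unfold_step zero.
case: (boolP (has (fun v => 0 < v) (ys st))) => pos.
  have down : is_down_step st by apply/and3P.
  case E: (cands st) => [|a l];
    [apply: StepNoCand | apply: StepDown] => //;
    by rewrite ?E // unfold_step (negbTE zero) pos E.
by apply: StepStop => //; rewrite unfold_step (negbTE zero) (negbTE pos).
Qed.

Lemma size_step st : size (ys (step st)) = size (ys st).
Proof.
by case: (stepP st) => [_ ->|_ _ ->|_ _ ->|_ _ ->|_ _ _ ->] //=;
  rewrite ?size_up_update ?size_down_update.
Qed.

Lemma size_iter_step s st : size (ys (iter s step st)) = size (ys st).
Proof. by elim: s => //= s IH; rewrite size_step. Qed.

Lemma iter_step_halted s st : halted st -> iter s step st = st.
Proof. by move=> hst; elim: s => //= s ->; rewrite /step hst. Qed.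

Definition mass (v : int) : nat := if 0 <= v then (absz v).+1 else 0.

Definition pos_mass (y : seq int) : nat := \sum_(m < size y) mass y`_m.

Lemma mass_le a b : a <= b -> (mass a <= mass b)%N.
Proof. rewrite /mass; case: ifP; case: ifP => //; lia. Qed.

Lemma mass_lt a b : a < b -> 0 <= b -> (mass a < mass b)%N.
Proof. rewrite /mass; case: ifP; case: ifP => //; lia. Qed.

Lemma pos_mass_lt (y y' : seq int) : size y' = size y ->
  (forall m, (m < size y)%N -> y'`_m <= y`_m) ->
  (exists2 m, (m < size y)%N & y'`_m < y`_m /\ 0 <= y`_m) ->
  (pos_mass y' < pos_mass y)%N.
Proof.
move=> sz le [m my [lt ge]]; rewrite /pos_mass sz.
rewrite (bigD1 (Ordinal my)) // [X in (_ < X)%N](bigD1 (Ordinal my)) //=.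
rewrite -addSn; apply: leq_add; first exact: mass_lt.
by apply: leq_sum => i _; apply/mass_le/le.
Qed.

Lemma pos_mass_step st : ~~ halted (step st) ->
  (pos_mass (ys (step st)) < pos_mass (ys st))%N.
Proof.
case: (stepP st) => [h ->|_ zero ->|_ nonempty ->|_ _ ->|_ _ _ ->] //=;
  try by rewrite h.
- have [uy yu _] := up_feederP zero => _.
  apply: pos_mass_lt; first exact: size_up_update.
    move=> m my; rewrite nth_up_update //; case: eqP => [->|_]; first by rewrite yu.
    by case: ifP => _ //; lia.
  by exists (up_feeder (ys st)); rewrite // nth_up_update // eqxx yu.
- move=> _; have [/mem_candsP[i /and4P[ltif fy yi _]] _] := down_feederP nonempty.
  apply: pos_mass_lt; first exact: size_down_update.
    by move=> m my; rewrite nth_down_update //; case: ifP => _ //; lia.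
  have iy : (i < size (ys st))%N by lia.
  by exists i; rewrite // nth_down_update // ltif yi /=; split; [lia | exact: ltW].
Qed.

Lemma pos_mass_init x : (pos_mass (ys (init x)) <= sumn x)%N.
Proof.
rewrite /pos_mass /init /= size_map sumnE (big_nth 0%N) big_mkord.
apply: leq_sum => m _; rewrite (nth_map 0%N) // /mass; case: ifP => //; lia.
Qed.

Definition final_time (x : seq nat) : nat := (size x + sumn x).+1.

Lemma pos_mass_state_at x t : ~~ halted (state_at x t) ->
  (pos_mass (ys (state_at x t)) + t <= sumn x)%N.
Proof.
elim: t => [|t IH]; first by rewrite addn0 => _; apply: pos_mass_init.
rewrite /state_at iterS -/(state_at x t) => running.
have : ~~ halted (state_at x t).
  by apply: contra running => hst; rewrite /step hst.
by move/IH; have := pos_mass_step running; lia.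
Qed.

Lemma halted_after_final x t : (final_time x <= t)%N -> halted (state_at x t).
Proof.
move=> le; rewrite /state_at -(subnK le) iterD.
have final : halted (state_at x (final_time x)).
  by apply/negPn/negP => /pos_mass_state_at; rewrite /final_time; lia.
by rewrite iter_step_halted.
Qed.

Lemma mem_pair_map (T1 T2 : eqType) (s : seq T1) (f : T2) a b :
  ((a, b) \in [seq (k, f) | k <- s]) = (b == f) && (a \in s).
Proof.
apply/mapP/andP => [[k ks [-> ->]]|[/eqP -> ha]]; first by rewrite eqxx.
by exists a.
Qed.

Lemma count_split_at (P : pred nat) (s : seq nat) m : ~~ P m ->
  (count (fun j => (j < m)%N && P j) s + count (fun j => (m < j)%N && P j) s
   = count P s)%N.
Proof.
move=> Pm; elim: s => //= j s <-; rewrite addnACA.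
by case: ltngtP => [||->]; rewrite ?(negbTE Pm) //= ?add0n ?addn0.
Qed.

Definition count_neg_left (y : seq int) m n : nat :=
  count (fun j => (j < m)%N && (y`_j < 0)) (iota 0 n).

Definition count_downs_from (d : seq (nat * nat)) m n : nat :=
  count (fun j => (m, j) \in d) (iota 0 n).

Record alg_inv (x : seq nat) (st : state) : Prop := AlgInv {
  inv_size : size (ys st) = size x;
  inv_halted : halted st -> forall m, (m < size x)%N -> (ys st)`_m < 0;
  inv_neg_inj : forall a b, (a < size x)%N -> (b < size x)%N -> a <> b ->
    (ys st)`_a < 0 -> (ys st)`_b < 0 -> (ys st)`_a <> (ys st)`_b;
  inv_downs : forall a b, (a, b) \in downs st ->
    [/\ (a < b)%N, (b < size x)%N, (ys st)`_b < 0 &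
        forall i, (i < b)%N -> 0 < (ys st)`_i -> (i, b) \in downs st];
  (* decremented once per up feeder to its left and once per down edge m <- j *)
  inv_nonneg : forall m, (m < size x)%N -> 0 <= (ys st)`_m ->
    (ys st)`_m = (nth 0%N x m)%:Z - 1 - (count_neg_left (ys st) m (size x))%:Z
                 - (count_downs_from (downs st) m (size x))%:Z }.

Lemma alg_inv_init x : parking_function x -> alg_inv x (init x).
Proof.
case/andP => /allP x_pos _.
have y0 m : (m < size x)%N -> (ys (init x))`_m = (nth 0%N x m)%:Z - 1.
  by move=> mx; rewrite /init /= (nth_map 0%N).
have xm_pos m : (m < size x)%N -> (0 < nth 0%N x m)%N.
  by move=> mx; apply: x_pos; rewrite mem_nth.
split => //.
- by rewrite size_map.
- by move=> a b ax _ _; rewrite y0 //; have := xm_pos a ax; lia.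
- move=> m mx _.
  have no_downs : count_downs_from [::] m (size x) = 0%N.
    by rewrite /count_downs_from; elim: (iota 0 (size x)).
  have no_neg : count_neg_left (ys (init x)) m (size x) = 0%N.
    rewrite /count_neg_left (@eq_in_count _ _ pred0) ?count_pred0 // => j.
    by rewrite mem_iota /= => jx; rewrite y0 //; have := xm_pos j jx; lia.
  by rewrite no_downs no_neg y0 //; lia.
Qed.

Section UpUpdate.
Variables (y : seq int) (u : nat).
Hypotheses (uy : (u < size y)%N) (yu : y`_u = 0).

Lemma up_update_le m : (m < size y)%N -> (up_update y u)`_m <= y`_m.
Proof.
move=> my; rewrite nth_up_update //; case: eqP => [->|_]; first by rewrite yu.
by case: ifP => _ //; lia.
Qed.

Lemma up_update_feeder : (up_update y u)`_u = -1.
Proof. by rewrite nth_up_update // eqxx. Qed.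

Lemma up_update_neg m : (m < size y)%N -> m != u ->
  ((up_update y u)`_m < 0) = (y`_m < 0).
Proof.
move=> my mu; rewrite nth_up_update // (negbTE mu).
by case: ifP => [/orP[/andP[_ ?]|?]|?]; lia.
Qed.

Lemma up_update_negE m : (m < size y)%N -> y`_m < 0 ->
  (up_update y u)`_m = y`_m - 1.
Proof.
move=> my ym; rewrite nth_up_update // ym orbT; case: eqP => // mu.
by move: ym; rewrite mu yu.
Qed.

Lemma count_neg_left_up_update m :
  count_neg_left (up_update y u) m (size y) =
  if (u < m)%N then (count_neg_left y m (size y)).+1 else count_neg_left y m (size y).
Proof.
rewrite /count_neg_left; case: ifP => um.
  rewrite -(@count_predU1_notin _ _ _ u) ?iota_uniq ?mem_iota /= ?yu ?ltxx ?andbF //.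
  apply: eq_in_count => j; rewrite mem_iota /= => jy.
  case: (eqVneq j u) => [->|ju]; first by rewrite um up_update_feeder // orbT.
  by rewrite orbF up_update_neg.
apply: eq_in_count => j; rewrite mem_iota /= => jy.
case: (boolP (j < m)%N) => //= jm.
have ju : j != u by apply/eqP => ju; move: um; rewrite -ju jm.
by rewrite up_update_neg.
Qed.

End UpUpdate.

Lemma alg_inv_up x st : alg_inv x st -> has (fun v => v == 0) (ys st) ->
  alg_inv x (State (up_update (ys st) (up_feeder (ys st))) (downs st) false).
Proof.
move=> [sz _ neg_inj downs_ok nonneg] zero.
have [uy yu above] := up_feederP zero.
set u := up_feeder _ in uy yu above *.
set y := ys st in sz uy yu above neg_inj downs_ok nonneg *.
rewrite -sz in neg_inj downs_ok nonneg.
set y' := up_update y u.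
split => //=; rewrite -sz ?size_up_update //.
- move=> a b ay bay ab.
  case: (eqVneq a u) => [au|au]; case: (eqVneq b u) => [bu|bu].
  + by case: ab; rewrite au bu.
  + rewrite au up_update_feeder // up_update_neg // => _ yb.
    rewrite up_update_negE //; lia.
  + rewrite bu up_update_feeder // up_update_neg // => ya _.
    rewrite up_update_negE //; lia.
  + rewrite !up_update_neg // => ya yb; rewrite !up_update_negE //.
    by move=> e; apply: (neg_inj a b) => //; lia.
- move=> a b /downs_ok [ab bx yb fed].
  split => //; first by rewrite up_update_negE //; lia.
  move=> i ib yi; apply: fed => //.
  exact: lt_le_trans yi (up_update_le uy yu (ltn_trans ib bx)).
- move=> m my ym'.
  have mu : m != u by apply: contraTneq ym' => ->; rewrite up_update_feeder.
  have ym : 0 <= y`_m := le_trans ym' (up_update_le uy yu my).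
  rewrite count_neg_left_up_update //.
  move: (nonneg m my ym).
  rewrite /y' nth_up_update // (negbTE mu).
  case: (ltnP u m) => um /=.
    have -> : 0 < y`_m by rewrite lt_def ym andbT; apply: above; lia.
    by move=> /=; lia.
  by rewrite ltNge ym /=.
Qed.

Section DownUpdate.
Variables (st : state) (f : nat).
Let y := ys st.
Let y' := ys (down_update st f).

Lemma down_update_le m : (m < size y)%N -> y'`_m <= y`_m.
Proof. by move=> my; rewrite /y' /y nth_down_update //; case: ifP => _ //; lia. Qed.

Lemma down_update_neg m : (m < size y)%N -> (y'`_m < 0) = (y`_m < 0).
Proof.
move=> my; rewrite /y' /y nth_down_update //.
by case: ifP => // /andP[_ ym]; apply/idP/idP; lia.
Qed.

Lemma down_update_negE m : (m < size y)%N -> y`_m < 0 -> y'`_m = y`_m.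
Proof. by move=> my ym; rewrite /y' /y nth_down_update // ltNge (ltW ym) andbF. Qed.

Lemma count_downs_from_down_update m n :
  (forall a, (a, f) \notin downs st) -> (f < n)%N ->
  count_downs_from (downs (down_update st f)) m n =
  if (m < f)%N && (0 < y`_m) then (count_downs_from (downs st) m n).+1
  else count_downs_from (downs st) m n.
Proof.
move=> fresh fn; rewrite /count_downs_from /=.
case: ifP => [/andP[mf ym]|new].
  rewrite -(@count_predU1_notin _ _ _ f) ?iota_uniq ?mem_iota ?fresh //.
  apply: eq_in_count => j _ /=.
  rewrite mem_cat mem_pair_map mem_filter mem_iota /= mf ym.
  by case: (j == f); rewrite ?orbT ?orbF.
apply: eq_in_count => j _ /=.
rewrite mem_cat mem_pair_map mem_filter mem_iota /= add0n.
by move: new; rewrite /y andbC => ->; rewrite andbF.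
Qed.

End DownUpdate.

Lemma alg_inv_down x st f : alg_inv x st -> is_down_step st ->
  (f < size x)%N -> (ys st)`_f < 0 ->
  (exists i, [/\ (i < f)%N, 0 < (ys st)`_i & (i, f) \notin downs st]) ->
  alg_inv x (down_update st f).
Proof.
move=> [sz _ neg_inj downs_ok nonneg] /and3P[_ zero _] fx yf [i0 [i0f yi0 new]].
have fresh a : (a, f) \notin downs st.
  by apply/negP => /downs_ok [_ _ _ fed]; move: new; rewrite fed.
set y := ys st in sz zero yf yi0 neg_inj downs_ok nonneg *.
rewrite -sz in neg_inj downs_ok nonneg fx.
set y' := ys (down_update st f).
have y'_le m : (m < size y)%N -> y'`_m <= y`_m by exact: down_update_le.
split => /=; rewrite -sz ?size_down_update //.
- move=> a b ay bay ab; rewrite !down_update_neg // => ya yb.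
  by rewrite !down_update_negE //; exact: neg_inj.
- move=> a b; rewrite mem_cat => /orP[|].
    rewrite mem_pair_map mem_filter mem_iota /= => /andP[/eqP -> /andP[ya af]].
    split => //; first by rewrite down_update_negE.
    move=> i ifl yi; rewrite mem_cat mem_pair_map mem_filter mem_iota /= eqxx ifl.
    by rewrite (lt_le_trans yi (y'_le i (ltn_trans ifl fx))).
  case/downs_ok => ab bx yb fed; split => //; first by rewrite down_update_negE.
  move=> i ib yi; rewrite mem_cat fed ?orbT //.
  exact: lt_le_trans yi (y'_le i (ltn_trans ib bx)).
- move=> m my ym'.
  have ym : 0 < y`_m.
    rewrite lt_def (le_trans ym' (y'_le m my)) andbT.
    by apply: (hasPn zero); rewrite mem_nth.
  have -> : count_neg_left y' m (size y) = count_neg_left y m (size y).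
    by apply: eq_in_count => j; rewrite mem_iota /= => jy; rewrite down_update_neg.
  rewrite count_downs_from_down_update // /y' nth_down_update // -/y ym andbT.
  by have := nonneg m my (ltW ym); case: ifP => _; lia.
Qed.

Lemma entry_when_all_fed x st m : alg_inv x st ->
  (forall b i, (b < size x)%N -> (ys st)`_b < 0 -> (i < b)%N ->
     0 < (ys st)`_i -> (i, b) \in downs st) ->
  (m < size x)%N -> 0 < (ys st)`_m ->
  (nth 0%N x m)%:Z =
  (ys st)`_m + 1 + (count (fun j => (ys st)`_j < 0) (iota 0 (size x)))%:Z.
Proof.
move=> [_ _ _ downs_ok nonneg] fed mx ym.
have out_edges : count_downs_from (downs st) m (size x) =
    count (fun j => (m < j)%N && ((ys st)`_j < 0)) (iota 0 (size x)).
  apply: eq_in_count => j; rewrite mem_iota /= => jx.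
  by apply/idP/andP => [/downs_ok [mj _ yj _] // | [mj yj]]; exact: fed.
have ym_neg : ~~ ((ys st)`_m < 0) by rewrite -leNgt ltW.
rewrite -(count_split_at _ ym_neg) -out_edges.
by have := nonneg m mx (ltW ym); rewrite /count_neg_left; lia.
Qed.

(* This is where the parking condition enters: if every negative entry were
   already fed by all positive entries to its left, each positive entry would
   satisfy x_m = y_m + 1 + q with q the number of negative entries, so only the
   q negative positions could carry a value x_m <= q + 1, whereas the parking
   condition provides q + 1 of them. *)
Lemma down_step_neg_cand x st : parking_function x -> alg_inv x st ->
  is_down_step st -> exists2 b, b \in cands st & (ys st)`_b < 0.
Proof.
move=> park inv /and3P[_ zero pos]; have sz := inv_size inv.
set n := size x in sz *; set y := ys st in sz zero pos *.
case: (boolP (has (fun b => (y`_b < 0) && (b \in cands st)) (iota 0 n))).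
  by case/hasP => b _ /andP[yb bc]; exists b.
move/hasPn => no_cand; exfalso.
have fed b i : (b < n)%N -> y`_b < 0 -> (i < b)%N -> 0 < y`_i ->
    (i, b) \in downs st.
  move=> bn yb ib yi; apply/negPn/negP => new.
  have bc : b \in cands st.
    by apply: (@is_cand_cands _ i); rewrite /is_cand ib yi new -/y sz bn.
  by move: (no_cand b); rewrite mem_iota yb bc => /(_ bn).
set q := count (fun j => y`_j < 0) (iota 0 n).
have qn : (q < n)%N.
  have [v vy v_pos] := hasP pos; have [m mn ym] := nthP 0 vy.
  have : has (predC (fun j => y`_j < 0)) (iota 0 n).
    by apply/hasP; exists m; rewrite /= ?mem_iota -?sz // ym -leNgt ltW.
  have := count_predC (fun j => y`_j < 0) (iota 0 n).
  by rewrite has_count size_iota -/q; lia.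
have small_neg : (count (fun m => nth 0%N x m <= q.+1)%N (iota 0 n) <= q)%N.
  apply: sub_in_count => m; rewrite mem_iota /= => mn xm.
  have : y`_m != 0 by apply: (hasPn zero); rewrite mem_nth // sz.
  case: (ltrgtP y`_m 0) => // ym _.
  by have := entry_when_all_fed inv fed mn ym; rewrite -/y -/n -/q; lia.
have := parking_function_count park qn.
rewrite -[in count _ x](mkseq_nth 0%N x) count_map.
by move=> /leq_trans/(_ small_neg); rewrite ltnn.
Qed.

Lemma down_feeder_neg x st : parking_function x -> alg_inv x st ->
  is_down_step st -> cands st != [::] /\ (ys st)`_(down_feeder st) < 0.
Proof.
move=> park inv down; have [b bc yb] := down_step_neg_cand park inv down.
have nonempty : cands st != [::] by apply: contraTneq bc => ->.
by split => //; exact: le_lt_trans (proj2 (down_feederP nonempty) b bc) yb.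
Qed.

Lemma alg_inv_step x st : parking_function x -> alg_inv x st -> alg_inv x (step st).
Proof.
move=> park inv.
case: (stepP st) => [_ -> //|_ zero ->|down nonempty ->|down empty _|_ zero pos ->].
- exact: alg_inv_up.
- have [_ yf] := down_feeder_neg park inv down.
  have [/mem_candsP[i /and4P[ifl fy yi new]] _] := down_feederP nonempty.
  by apply: alg_inv_down => //; [rewrite -(inv_size inv) | exists i].
- by have [] := down_feeder_neg park inv down; rewrite empty.
- case: inv => sz _ neg_inj downs_ok nonneg; split => //= _ m mx.
  rewrite -sz in mx.
  have : (ys st)`_m != 0 by apply: (hasPn zero); rewrite mem_nth.
  have : ~~ (0 < (ys st)`_m) by apply: (hasPn pos); rewrite mem_nth.
  by case: ltrgtP.
Qed.

Lemma alg_inv_state_at x t : parking_function x -> alg_inv x (state_at x t).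
Proof.
move=> park; elim: t => [|t IH]; first exact: alg_inv_init.
by rewrite /state_at iterS; apply: alg_inv_step.
Qed.

Definition settled_below j k st : Prop :=
  (ys st)`_j < 0 /\ (0 <= (ys st)`_k \/ (ys st)`_j < (ys st)`_k).

Lemma settled_below_step st j k :
  (j < size (ys st))%N -> (k < size (ys st))%N ->
  settled_below j k st -> settled_below j k (step st).
Proof.
move=> jy ky [yj yk].
case: (stepP st) => [_ ->|_ zero ->|_ _ ->|_ _ ->|_ _ _ ->] //=; try by split.
- have [uy yu _] := up_feederP zero.
  rewrite /settled_below /= !nth_up_update //.
  have ju : j != up_feeder (ys st) by apply: contraTneq yj => ->; rewrite yu.
  rewrite (negbTE ju) yj orbT; split; first lia.
  case: eqP => [_|_]; first by right; lia.
  case: ifP => [/orP[/andP[_ ?]|?]|_]; case: yk; lia.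
- rewrite /settled_below down_update_negE // nth_down_update //.
  by split => //; case: ifP => [/andP[_ ?]|_]; case: yk; lia.
Qed.

Lemma settled_below_iter s st j k :
  (j < size (ys st))%N -> (k < size (ys st))%N ->
  settled_below j k st -> settled_below j k (iter s step st).
Proof.
move=> jy ky; elim: s => //= s IH /IH.
by apply: settled_below_step; rewrite size_iter_step.
Qed.

Lemma down_feeder_priority x t k :
  parking_function x -> is_down_step (state_at x t) ->
  k \in cands (state_at x t) -> k <> down_feeder (state_at x t) ->
  `|(source_priority x)`_k| < `|(source_priority x)`_(down_feeder (state_at x t))|.
Proof.
move=> park down kc kf; set st := state_at x t; set f := down_feeder st.
have inv := alg_inv_state_at t park.
have [nonempty yf] := down_feeder_neg park inv down.
have [fc f_min] := down_feederP nonempty.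
have [fy ky] : (f < size (ys st))%N /\ (k < size (ys st))%N.
  by move: fc kc; rewrite !mem_cands => /andP[-> _] /andP[-> _].
have settled : settled_below f k st.
  split => //; case: (ltP (ys st)`_k 0) => yk; [right | by left].
  rewrite lt_neqAle f_min // andbT; apply/eqP.
  by apply: (inv_neg_inj inv); rewrite -?(inv_size inv) // => fk; apply: kf.
have t_final : (t <= final_time x)%N.
  rewrite leqNgt; apply/negP => /ltnW /halted_after_final halted_t.
  by case/and3P: down; rewrite halted_t.
have [fx kx] : (f < size x)%N /\ (k < size x)%N by rewrite -(inv_size inv).
have final_neg := inv_halted (alg_inv_state_at (final_time x) park)
  (halted_after_final (leqnn _)).
have [_ [yk|]] : settled_below f k (state_at x (final_time x)).
- by rewrite /state_at -(subnK t_final) iterD; apply: settled_below_iter.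
- by move: yk; rewrite leNgt final_neg.
- by rewrite /source_priority -/(final_time x) !ltr0_norm ?final_neg // ltrN2.
Qed.

Theorem lemma2p6 (x : seq nat) (t i j k : nat) :
  parking_function x ->
  is_down_step (state_at x t) ->
  is_cand (state_at x t) i j -> is_cand (state_at x t) i k -> j <> k ->
  (down_feeder (state_at x t) = j \/ down_feeder (state_at x t) = k) ->
  (down_feeder (state_at x t) = j <->
     `|(source_priority x)`_k| < `|(source_priority x)`_j|).
Proof.
move=> park down cand_j cand_k jk feeder.
have [jc kc] := (is_cand_cands cand_j, is_cand_cands cand_k).
split => [fj | lt_kj].
  by rewrite -fj; apply: down_feeder_priority => // kf; apply: jk; rewrite -fj.
case: feeder => // fk; exfalso.
have := down_feeder_priority park down jc (fun jf => jk (etrans jf fk)).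
by rewrite fk ltNge (ltW lt_kj).
Qed.
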